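(* Under the substitution $y=1/w$, the Chazy equation $y'''-2yy''+3(y')^{2}=0$ becomes $$-w^{2}w'''+6ww'w''-6(w')^{3}+2ww''-(w')^{2}=0 .$$ For this equation the leading-order behaviour $w=w_0x^{-1}$ is admissible with $w_0$ arbitrary, its resonances are $R=-1,0,1$, and the equation admits formal solutions given by the Right Painlevé series $$w(x)=w_0x^{-1}+w_1+w_2x+\sum_{i\ge3}w_i x^{i-1},$$ in which $w_0\neq0$ and $w_1$ are arbitrary constants and all remaining coefficients are determined by them (the location of the singularity, here $x=0$, providing the third arbitrary constant via $x\mapsto x-x_0$). Consequently $y=1/w$ gives a three-parameter family of solutions of the Chazy equation.
   Context: A Right Painlevé series is a Laurent-type expansion about the singularity containing finitely many negative powers and infinitely many increasing (positive) powers, as opposed to a Left Painlevé series, which has infinitely many decreasing powers. Resonances are the roots $R$ of the polynomial obtained as the coefficient of $m$ after substituting $w=w_0x^{-1}+mx^{-1+R}$ into the dominant terms; they indicate where arbitrary constants enter the expansion. *)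

From HB Require Import structures.
From mathcomp Require Import all_boot all_order all_algebra.
Set Implicit Arguments. Unset Strict Implicit. Unset Printing Implicit Defensive.
Import Order.TTheory GRing.Theory Num.Theory.
Local Open Scope ring_scope.

Section LaurentSeries.
Variable R : comNzRingType.

(* [LSer m a] represents the formal Laurent series  x^(-m) * sum_(i>=0) a i x^i,
   i.e. a "Right" series: finitely many negative powers, infinitely many
   increasing powers. *)
Record lser := LSer { lord : nat; lcoef : nat -> R }.

Definition fps_mul (a b : nat -> R) (n : nat) : R :=
  \sum_(i < n.+1) a i * b (n - i)%N.
Definition fps_shift (k : nat) (a : nat -> R) (n : nat) : R :=
  if (k <= n)%N then a (n - k)%N else 0.

(* equality of the represented Laurent series:
   x^(-m) A = x^(-k) B  iff  x^k A = x^m B *)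
Definition lser_eq (s t : lser) : Prop :=
  forall n, fps_shift (lord t) (lcoef s) n = fps_shift (lord s) (lcoef t) n.

Definition lmul (s t : lser) : lser :=
  LSer (lord s + lord t) (fps_mul (lcoef s) (lcoef t)).
Definition ladd (s t : lser) : lser :=
  LSer (lord s + lord t)
       (fun n => fps_shift (lord t) (lcoef s) n + fps_shift (lord s) (lcoef t) n).
Definition lscale (c : R) (s : lser) : lser :=
  LSer (lord s) (fun n => c * lcoef s n).
(* d/dx (x^(-m) A) = x^(-m-1) * sum_i (i - m) a_i x^i *)
Definition lderiv (s : lser) : lser :=
  LSer (lord s).+1 (fun n => (n%:R - (lord s)%:R) * lcoef s n).
Definition lconst (c : R) : lser := LSer 0 (fun n => if n == 0%N then c else 0).
Definition lmono (e : int) (c : R) : lser :=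
  match e with
  | Posz k => LSer 0 (fun n => if n == k then c else 0)
  | Negz k => LSer k.+1 (fun n => if n == 0%N then c else 0)
  end.

Definition lpow4 (w : lser) : lser := lmul w (lmul w (lmul w w)).

Definition chazy (y : lser) : lser :=
  let y1 := lderiv y in let y2 := lderiv y1 in let y3 := lderiv y2 in
  ladd (ladd y3 (lscale (- 2%:R) (lmul y y2))) (lscale 3%:R (lmul y1 y1)).

Definition wDom (w : lser) : lser :=
  let w1 := lderiv w in let w2 := lderiv w1 in let w3 := lderiv w2 in
  ladd (ladd (lscale (-1) (lmul w (lmul w w3)))
             (lscale 6%:R (lmul w (lmul w1 w2))))
       (lscale (- 6%:R) (lmul w1 (lmul w1 w1))).

Definition wEq (w : lser) : lser :=
  let w1 := lderiv w in let w2 := lderiv w1 in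
  ladd (ladd (wDom w) (lscale 2%:R (lmul w w2))) (lscale (-1) (lmul w1 w1)).

End LaurentSeries.

(* coefficientwise map (used to extract the coefficient of m) *)
Definition lmap (R S : comNzRingType) (f : R -> S) (s : lser R) : lser S :=
  LSer (lord s) (fun n => f (lcoef s n)).

From HB Require Import structures.
From mathcomp Require Import all_boot all_order all_algebra.
From mathcomp Require Import boolp.
From mathcomp Require Import ring zify.
Import Order.TTheory GRing.Theory Num.Theory.
Local Open Scope ring_scope.
Set Implicit Arguments. Unset Strict Implicit. Unset Printing Implicit Defensive.

(* A Laurent series x^-m A is handled through its coefficient series A in the
   ring R[[x]] and the Euler operator theta = x d/dx: since
   d/dx (x^-m A) = x^-(m+1) (theta - m) A, every identity between the
   Laurent series becomes a polynomial identity in R[[x]].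
   For y = 1/w, differentiating y w = 1 three times lets one eliminate y', y''
   and y''' from w^4 Chazy(y), which gives the w-equation.
   Substituting w = x^-1 sum_i c_i x^i into the w-equation, the coefficient of
   x^n is c_0^2 Q(n) c_n plus a polynomial in c_0, ..., c_(n-1), where
   Q(n) = -(n-1) n (n+1) is the resonance polynomial of the dominant terms.
   The equations for n = 0 and n = 1 hold identically, which leaves c_0 and c_1
   free, and every later c_n is forced since Q(n) <> 0 for n >= 2.  Finally w
   is invertible when c_0 <> 0, and then w^4 Chazy(1/w) = 0 gives
   Chazy(1/w) = 0. *)

Definition fps (R : comNzRingType) := nat -> R.
HB.instance Definition _ (R : comNzRingType) := Choice.on (fps R).

Lemma fps_mul_coefM (R : comNzRingType) (a b : nat -> R) (p q : {poly R}) n :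
  (forall i, (i <= n)%N -> p`_i = a i) -> (forall i, (i <= n)%N -> q`_i = b i) ->
  fps_mul a b n = (p * q)`_n.
Proof.
move=> hp hq; rewrite coefM /fps_mul; apply: eq_bigr => i _.
have ilt : (i <= n)%N by rewrite -ltnS ltn_ord.
by rewrite hp // hq // leq_subr.
Qed.

Definition fps_poly (R : comNzRingType) (n : nat) (a : nat -> R) : {poly R} :=
  \poly_(i < n.+1) a i.

Lemma coef_fps_poly (R : comNzRingType) n (a : nat -> R) i :
  (i <= n)%N -> (fps_poly n a)`_i = a i.
Proof. by move=> h; rewrite coef_poly ltnS h. Qed.

Section FpsRing.
Variable R : comNzRingType.
Implicit Types a b c : fps R.

Definition fps_add a b : fps R := fun n => a n + b n.
Definition fps_opp a : fps R := fun n => - a n.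
Definition fps_zero : fps R := fun n => 0.
Definition fps_one : fps R := fun n => (n == 0%N)%:R.

Lemma fps_addA : associative fps_add.
Proof. by move=> a b c; apply: funext => n; rewrite /fps_add addrA. Qed.
Lemma fps_addC : commutative fps_add.
Proof. by move=> a b; apply: funext => n; rewrite /fps_add addrC. Qed.
Lemma fps_add0 : left_id fps_zero fps_add.
Proof. by move=> a; apply: funext => n; rewrite /fps_add add0r. Qed.
Lemma fps_addN : left_inverse fps_zero fps_opp fps_add.
Proof. by move=> a; apply: funext => n; rewrite /fps_add /fps_opp addNr. Qed.

HB.instance Definition _ :=
  GRing.isZmodule.Build (fps R) fps_addA fps_addC fps_add0 fps_addN.

(* Each coefficient of a product only involves truncations, so the ring laws
   are inherited from {poly R}. *)
Lemma fps_mulA : associative (@fps_mul R).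
Proof.
move=> a b c; apply: funext => n.
have trunc f i : (i <= n)%N -> (fps_poly n f)`_i = f i by exact: coef_fps_poly.
have trunc_mul f g i : (i <= n)%N -> fps_mul f g i = (fps_poly n f * fps_poly n g)`_i.
  by move=> hi; apply: fps_mul_coefM => j hj; rewrite trunc // (leq_trans hj hi).
rewrite (@fps_mul_coefM _ _ _ (fps_poly n a) (fps_poly n b * fps_poly n c));
  [|exact: trunc|by move=> i hi; rewrite trunc_mul].
rewrite (@fps_mul_coefM _ _ _ (fps_poly n a * fps_poly n b) (fps_poly n c)) ?mulrA //;
  [by move=> i hi; rewrite trunc_mul|exact: trunc].
Qed.

Lemma fps_mulC : commutative (@fps_mul R).
Proof.
move=> a b; apply: funext => n.
have ha i : (i <= n)%N -> (fps_poly n a)`_i = a i by exact: coef_fps_poly.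
have hb i : (i <= n)%N -> (fps_poly n b)`_i = b i by exact: coef_fps_poly.
by rewrite (fps_mul_coefM ha hb) (fps_mul_coefM hb ha) mulrC.
Qed.

Lemma fps_mul1 : left_id fps_one (@fps_mul R).
Proof.
move=> a; apply: funext => n.
have ha i : (i <= n)%N -> (fps_poly n a)`_i = a i by exact: coef_fps_poly.
have h1 i : (i <= n)%N -> (1 : {poly R})`_i = fps_one i by rewrite coef1.
by rewrite (fps_mul_coefM h1 ha) mul1r coef_fps_poly.
Qed.

Lemma fps_mulDl : left_distributive (@fps_mul R) fps_add.
Proof.
move=> a b c; apply: funext => n; rewrite /fps_mul /fps_add -big_split /=.
by apply: eq_bigr => i _; rewrite mulrDl.
Qed.

HB.instance Definition _ :=
  GRing.Zmodule_isComPzRing.Build (fps R) fps_mulA fps_mulC fps_mul1 fps_mulDl.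

Lemma fps_one_neq0 : (1 : fps R) != 0.
Proof.
apply/eqP => /(congr1 (fun f : fps R => f 0%N)) /eqP.
by rewrite /= /fps_one /= oner_eq0.
Qed.

HB.instance Definition _ := GRing.PzSemiRing_isNonZero.Build (fps R) fps_one_neq0.

End FpsRing.

Section FpsTheory.
Variable R : comNzRingType.
Implicit Types A B : fps R.

Lemma fpsME A B n : (A * B) n = \sum_(i < n.+1) A i * B (n - i)%N.
Proof. by []. Qed.
Lemma fpsDE A B n : (A + B) n = A n + B n.
Proof. by []. Qed.
Lemma fpsNE A n : (- A) n = - A n.
Proof. by []. Qed.
Lemma fpsBE A B n : (A - B) n = A n - B n.
Proof. by []. Qed.
Lemma fps0E n : (0 : fps R) n = 0.
Proof. by []. Qed.
Lemma fps1E n : (1 : fps R) n = (n == 0%N)%:R.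
Proof. by []. Qed.

Lemma fpsM0E A B : (A * B) 0%N = A 0%N * B 0%N.
Proof. by rewrite fpsME big_ord_recl big_ord0 addr0. Qed.

Definition fpsX : fps R := fun n => (n == 1%N)%:R.
Definition fpsC (c : R) : fps R := fun n => if n == 0%N then c else 0.

Lemma mul_fpsX A : fpsX * A = fun n => if n is n'.+1 then A n' else 0.
Proof.
apply: funext => -[|n]; rewrite fpsME.
  by rewrite big_ord_recl big_ord0 /fpsX /= mul0r addr0.
rewrite big_ord_recl /fpsX /= mul0r add0r big_ord_recl /= mul1r subSS subn0.
by rewrite big1 ?addr0 // => i _; rewrite /fpsX /bump /= mul0r.
Qed.

Lemma fps_shiftE k A : fps_shift k A = fpsX ^+ k * A.
Proof.
elim: k A => [|k IH] A.
  by rewrite expr0 mul1r; apply: funext => n; rewrite /fps_shift leq0n subn0.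
by rewrite exprS -mulrA -IH mul_fpsX; apply: funext => -[|n].
Qed.

Lemma coef_fpsXnM k A n :
  (fpsX ^+ k * A) n = if (k <= n)%N then A (n - k)%N else 0.
Proof. by rewrite -fps_shiftE. Qed.

Lemma fpsXnM_inj k A B : fpsX ^+ k * A = fpsX ^+ k * B -> A = B.
Proof.
move=> h; apply: funext => n.
have := congr1 (fun f : fps R => f (n + k)%N) h => /=.
by rewrite !coef_fpsXnM leq_addl addnK.
Qed.

Lemma mul_fpsC c A : fpsC c * A = fun n => c * A n.
Proof.
apply: funext => n; rewrite fpsME big_ord_recl /= subn0.
by rewrite big1 ?addr0 // => i _; rewrite /fpsC /= mul0r.
Qed.

Lemma fpsC1 : fpsC 1 = 1.
Proof. by apply: funext => -[|n]. Qed.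
Lemma fpsCB a b : fpsC (a - b) = fpsC a - fpsC b.
Proof. by apply: funext => -[|n]; rewrite fpsBE /fpsC /= ?subr0. Qed.
Lemma fpsCM a b : fpsC (a * b) = fpsC a * fpsC b.
Proof. by rewrite mul_fpsC; apply: funext => -[|n]; rewrite /fpsC /= ?mulr0. Qed.

HB.instance Definition _ := GRing.isZmodMorphism.Build R (fps R) fpsC fpsCB.
HB.instance Definition _ :=
  GRing.isMonoidMorphism.Build R (fps R) fpsC (fpsC1, fpsCM).

Lemma fps_natC k : (k%:R : fps R) = fpsC k%:R.
Proof. by rewrite rmorph_nat. Qed.

Lemma fps_nat0E k : (k%:R : fps R) 0%N = k%:R.
Proof. by rewrite fps_natC. Qed.

Lemma coef_fpsXnC e c n : (fpsX ^+ e * fpsC c) n = if n == e then c else 0.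
Proof.
rewrite coef_fpsXnM /fpsC; case: (leqP e n) => h.
  by rewrite subn_eq0 eqn_leq h andbT.
by rewrite ltn_eqF.
Qed.

Definition euler A : fps R := fun n => n%:R * A n.

Lemma eulerD A B : euler (A + B) = euler A + euler B.
Proof. by apply: funext => n; rewrite /euler !fpsDE mulrDr. Qed.
Lemma eulerN A : euler (- A) = - euler A.
Proof. by apply: funext => n; rewrite /euler !fpsNE mulrN. Qed.
Lemma eulerM A B : euler (A * B) = euler A * B + A * euler B.
Proof.
apply: funext => n; rewrite /euler fpsDE !fpsME mulr_sumr -big_split /=.
apply: eq_bigr => i _; have Hi : (i <= n)%N by rewrite -ltnS ltn_ord.
rewrite -{1}(subnKC Hi) natrD; ring.
Qed.
Lemma euler0 : euler 0 = 0.
Proof. by apply: funext => n; rewrite /euler fps0E mulr0. Qed.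
Lemma euler_fpsC c : euler (fpsC c) = 0.
Proof. by apply: funext => -[|n]; rewrite /euler /fpsC /= ?mul0r ?mulr0. Qed.
Lemma euler_nat n : euler n%:R = 0.
Proof. by rewrite fps_natC euler_fpsC. Qed.
Lemma euler_fpsX : euler fpsX = fpsX.
Proof. by apply: funext => -[|[|n]]; rewrite /euler /fpsX /= ?mul0r ?mul1r ?mulr0. Qed.
Lemma euler_fpsXn k : euler (fpsX ^+ k) = k%:R * fpsX ^+ k.
Proof.
elim: k => [|k IH]; first by rewrite expr0 -fpsC1 euler_fpsC mul0r.
by rewrite exprS eulerM IH euler_fpsX -addn1 natrD; ring.
Qed.

Definition dtheta (m : nat) A : fps R := euler A - m%:R * A.
Arguments dtheta : simpl never.

Lemma dthetaE m A k : dtheta m A k = (k%:R - m%:R) * A k.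
Proof.
by rewrite /dtheta fpsBE fps_natC mul_fpsC /euler mulrBl.
Qed.
Lemma dthetaD m A B : dtheta m (A + B) = dtheta m A + dtheta m B.
Proof. by rewrite /dtheta eulerD; ring. Qed.
Lemma dthetaM n a b A B :
  n = (a + b)%N -> dtheta n (A * B) = dtheta a A * B + A * dtheta b B.
Proof. by move=> ->; rewrite /dtheta eulerM natrD; ring. Qed.
Lemma dtheta0 m : dtheta m 0 = 0.
Proof. by apply: funext => n; rewrite dthetaE mulr0. Qed.
Lemma dthetaXn k : dtheta k (fpsX ^+ k) = 0.
Proof. by rewrite /dtheta euler_fpsXn subrr. Qed.

Definition lfps (s : lser R) : fps R := lcoef s.
Arguments lfps : simpl never.

Lemma lser_eqE s t :
  lser_eq s t <-> fpsX ^+ (lord t) * lfps s = fpsX ^+ (lord s) * lfps t.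
Proof.
split => [H|H n]; first by apply: funext => n; rewrite -!fps_shiftE; exact: H.
by rewrite !fps_shiftE H.
Qed.

Lemma lfps_mul s t : lfps (lmul s t) = lfps s * lfps t.
Proof. by []. Qed.
Lemma lfps_add s t :
  lfps (ladd s t) = fpsX ^+ (lord t) * lfps s + fpsX ^+ (lord s) * lfps t.
Proof. by rewrite -!fps_shiftE. Qed.
Lemma lfps_scale c s : lfps (lscale c s) = fpsC c * lfps s.
Proof. by rewrite mul_fpsC. Qed.
Lemma lfps_deriv s : lfps (lderiv s) = dtheta (lord s) (lfps s).
Proof. by apply: funext => n; rewrite dthetaE. Qed.
Lemma lfps_const c : lfps (lconst c) = fpsC c.
Proof. by []. Qed.
Lemma lfps_LSer m (f : nat -> R) : lfps (LSer m f) = f.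
Proof. by []. Qed.

Lemma lser_eq0 s : lser_eq s (lconst 0) <-> lfps s = 0.
Proof. by rewrite lser_eqE /= expr0 mul1r lfps_const rmorph0 mulr0. Qed.

Definition lfpsE :=
  (lfps_add, lfps_mul, lfps_scale, lfps_deriv, lfps_const, lfps_LSer).

End FpsTheory.

Arguments fpsX {R}.

(* w^4 Chazy(y) minus the w-equation, multiplied out, is a combination of the
   relation Y W = u v and its three derivatives *)
Lemma eliminate_reciprocal_derivs (K : comNzRingType)
    (u v X Y Y1 Y2 Y3 W W1 W2 W3 : K) :
  Y * W = u * v -> Y1 * W + Y * W1 = 0 ->
  Y2 * W + 2%:R * Y1 * W1 + Y * W2 = 0 ->
  Y3 * W + 3%:R * Y2 * W1 + 3%:R * Y1 * W2 + Y * W3 = 0 ->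
  W ^+ 4 * (u * Y3 - 2%:R * X * Y * Y2 + 3%:R * X * Y1 * Y1) =
    u ^+ 2 * v * (- (W ^+ 2 * W3) + 6%:R * W * W1 * W2 - 6%:R * W1 ^+ 3)
    + u ^+ 2 * v ^+ 2 * X * (2%:R * W * W2 - W1 ^+ 2).
Proof.
move=> E0 E1 E2 E3; have e0 : Y * W - u * v = 0 by rewrite E0 subrr.
apply/eqP; rewrite -subr_eq0; apply/eqP.
pose F0 := Y * W - u * v.
pose F1 := Y1 * W + Y * W1.
pose F2 := Y2 * W + 2%:R * Y1 * W1 + Y * W2.
pose F3 := Y3 * W + 3%:R * Y2 * W1 + 3%:R * Y1 * W2 + Y * W3.
transitivity (u * (W ^+ 3 * F3 - 3%:R * W1 * W ^+ 2 * F2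
    + (6%:R * W1 ^+ 2 * W - 3%:R * W2 * W ^+ 2) * F1
    + (- 6%:R * W1 ^+ 3 + 6%:R * W1 * W2 * W - W3 * W ^+ 2) * F0)
  + X * (- 2%:R * W ^+ 3 * Y * F2 + 4%:R * W1 * W ^+ 2 * Y * F1
    + (2%:R * W2 * W - 4%:R * W1 ^+ 2) * (Y * W + u * v) * F0)
  + X * (3%:R * W ^+ 2 * (Y1 * W - Y * W1) * F1
    + 3%:R * W1 ^+ 2 * (Y * W + u * v) * F0)).
  by rewrite /F0 /F1 /F2 /F3; ring.
by rewrite /F0 /F1 /F2 /F3 e0 E1 E2 E3; ring.
Qed.

Section ChazyReciprocal.
Variable R : comNzRingType.
Implicit Types Y W : fps R.

(* [Y * W = fpsX ^+ (my + mw)] says y w = 1 for y = x^-my Y and w = x^-mw W. *)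
Lemma leibniz3 my mw Y W : Y * W = fpsX ^+ (my + mw) ->
  let Y1 := dtheta my Y in let Y2 := dtheta my.+1 Y1 in
  let Y3 := dtheta my.+2 Y2 in
  let W1 := dtheta mw W in let W2 := dtheta mw.+1 W1 in
  let W3 := dtheta mw.+2 W2 in
  [/\ Y1 * W + Y * W1 = 0,
      Y2 * W + 2%:R * Y1 * W1 + Y * W2 = 0 &
      Y3 * W + 3%:R * Y2 * W1 + 3%:R * Y1 * W2 + Y * W3 = 0].
Proof.
move=> H Y1 Y2 Y3 W1 W2 W3.
have E1 : Y1 * W + Y * W1 = 0.
  by rewrite -(dthetaM _ _ (erefl (my + mw)%N)) H dthetaXn.
have E2 : Y2 * W + Y1 * W1 + (Y1 * W1 + Y * W2) = 0.
  rewrite -(dthetaM _ _ (erefl (my.+1 + mw)%N)) -(dthetaM _ _ (erefl (my + mw.+1)%N)).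
  by rewrite addSn addnS -dthetaD E1 dtheta0.
have E3 : Y3 * W + Y2 * W1 + (Y2 * W1 + Y1 * W2)
    + (Y2 * W1 + Y1 * W2 + (Y1 * W2 + Y * W3)) = 0.
  rewrite -(dthetaM _ _ (erefl (my.+2 + mw)%N)).
  rewrite -(dthetaM _ _ (erefl (my.+1 + mw.+1)%N)).
  rewrite -(dthetaM _ _ (erefl (my + mw.+2)%N)) !(addSn, addnS) -!dthetaD.
  by rewrite E2 dtheta0.
split => //; [rewrite -E2 | rewrite -E3]; ring.
Qed.

Lemma chazy_reciprocal (w y : lser R) : lser_eq (lmul y w) (lconst 1) ->
  lser_eq (lmul (lpow4 w) (chazy y)) (wEq w).
Proof.
move=> /lser_eqE; rewrite lfps_mul lfps_const fpsC1 /= expr0 mul1r mulr1.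
set my := lord y; set mw := lord w; set Y := lfps y; set W := lfps w => H.
have [E1 E2 E3] := leibniz3 H.
apply/lser_eqE; rewrite /chazy /wEq /wDom /lpow4; cbv zeta.
rewrite !lfpsE /= ?(rmorphN, rmorph_nat, rmorph1) -/my -/mw -/Y -/W.
move: E1 E2 E3.
set Y1 := dtheta my Y; set Y2 := dtheta my.+1 Y1; set Y3 := dtheta my.+2 Y2.
set W1 := dtheta mw W; set W2 := dtheta mw.+1 W1; set W3 := dtheta mw.+2 W2.
move=> E1 E2 E3.
rewrite !(addSn, addnS) !(exprS, exprD).
set u := fpsX ^+ my; set v := fpsX ^+ mw; set X := fpsX.
have E0 : Y * W = u * v by rewrite H exprD.
transitivity (X ^+ 17 * v ^+ 13 * u ^+ 3 *
  (W ^+ 4 * (u * Y3 - 2%:R * X * Y * Y2 + 3%:R * X * Y1 * Y1))); first ring.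
by rewrite (eliminate_reciprocal_derivs X E0 E1 E2 E3); ring.
Qed.

End ChazyReciprocal.

Lemma chazy_inverse_eq0 (R : comNzRingType) (w y : lser R) :
  lser_eq (lmul y w) (lconst 1) -> lser_eq (wEq w) (lconst 0) ->
  lser_eq (chazy y) (lconst 0).
Proof.
move=> yw /lser_eq0 hw; have /lser_eqE := chazy_reciprocal yw.
rewrite hw mulr0 lfps_mul => h.
have {}h : lfps (lpow4 w) * lfps (chazy y) = 0.
  by apply: (@fpsXnM_inj _ (lord (wEq w))); rewrite h mulr0.
move: yw => /lser_eqE; rewrite lfps_mul lfps_const fpsC1 /= expr0 mul1r mulr1.
move=> yw; apply/lser_eq0; apply: (@fpsXnM_inj _ ((lord y + lord w) * 4)).
rewrite mulr0 exprM -yw.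
transitivity (lfps y ^+ 4 * (lfps (lpow4 w) * lfps (chazy y))).
  by rewrite /lpow4 !lfps_mul; ring.
by rewrite h mulr0.
Qed.

Definition resonance (K : comNzRingType) (r : K) : K := - ((r - 1) * r * (r + 1)).

Definition resonance_poly (R : comNzRingType) (w0 : R) : {poly R} :=
  (- w0 ^+ 2)%:P * ('X ^+ 3 - 'X).

Lemma resonance_polyE (R : comNzRingType) (w0 r : R) :
  (resonance_poly w0).[r] = w0 ^+ 2 * resonance r.
Proof. by rewrite /resonance_poly /resonance !hornerE; ring. Qed.

Lemma root_resonance_poly (R : idomainType) (w0 z : R) :
  w0 != 0 -> root (resonance_poly w0) z = (z \in [:: -1; 0; 1]).
Proof.
move=> w0n0; rewrite rootE resonance_polyE mulf_eq0 expf_eq0 (negbTE w0n0) andbF /=.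
rewrite /resonance oppr_eq0 !mulf_eq0 subr_eq0 addr_eq0 !inE.
by case: (z == 1); case: (z == 0); case: (z == -1).
Qed.

(* w = x^-1 (a + m x^r) with r = q2 - q1, as a polynomial in m *)
Lemma lfps_wDom_two_terms (K : comNzRingType) (q1 q2 : nat) (a m : K) :
  let r := q2%:R - q1%:R in
  lfps (wDom (LSer q1.+1 (fpsX ^+ q1 * fpsC a + fpsX ^+ q2 * fpsC m))) =
  fpsX ^+ (6 * q1.+1 + 6) *
    (fpsX ^+ (q1 + q1 + q2) * fpsC (a ^+ 2 * m * resonance r)
     + fpsX ^+ (q1 + q2 + q2) * fpsC (a * m ^+ 2 * (2%:R * r * (2%:R * r ^+ 2 + 1)))
     + fpsX ^+ (q2 + q2 + q2) * fpsC (m ^+ 3 * resonance r)).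
Proof.
move=> r; rewrite mulnC exprD exprM.
rewrite /wDom; cbv zeta; rewrite !lfpsE /= ?(rmorphN, rmorph_nat, rmorph1).
rewrite /dtheta !(eulerD, eulerN, eulerM, euler0, euler_fpsXn, euler_fpsC, euler_nat).
rewrite /r /resonance !(addSn, addnS) !(exprS, exprD).
ring.
Qed.

Lemma ladd_lmono_split (K : comNzRingType) (a m : K) (r : int) :
  exists q1 q2 : nat, q2%:Z - q1%:Z = r /\
    ladd (lmono (-1) a) (lmono (r - 1) m) =
    LSer q1.+1 (fpsX ^+ q1 * fpsC a + fpsX ^+ q2 * fpsC m).
Proof.
case E: (r - 1) => [j|k].
  exists 0%N, j.+1; split; first lia.
  rewrite /ladd /=; congr LSer; apply: funext => -[|n];
    rewrite fpsDE !coef_fpsXnC /fps_shift //=.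
  by rewrite subn1.
exists k.+1, 1%N; split; first lia.
rewrite /ladd /=; congr LSer; apply: funext => n.
rewrite fpsDE !coef_fpsXnC /fps_shift; congr (_ + _); last by case: n => [|[|n]].
case: (leqP n k) => h; first by rewrite ltn_eqF // ltnS.
by rewrite subn_eq0 eqn_leq h andbT.
Qed.

Lemma lser_eq_lmono (K : comNzRingType) (L e : nat) (z : int) (c : K) :
  e%:Z - L%:Z = z -> lser_eq (LSer L (fpsX ^+ e * fpsC c)) (lmono z c).
Proof.
case: z => [j|k] h; apply/lser_eqE; rewrite /=.
  rewrite (_ : (fun n => _) = fpsX ^+ j * fpsC c :> fps K); last first.
    by apply: funext => n; rewrite coef_fpsXnC.
  by rewrite expr0 mul1r mulrA -!exprD; have -> : e = (L + j)%N by lia.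
by rewrite mulrA -exprD; have -> : (k.+1 + e = L)%N by lia.
Qed.

Lemma lmap_coef1 (R : comNzRingType) (s : lser {poly R}) e e1 e2 e3
    (g1 g2 g3 : {poly R}) :
  lfps s = fpsX ^+ e *
    (fpsX ^+ e1 * fpsC g1 + fpsX ^+ e2 * fpsC g2 + fpsX ^+ e3 * fpsC g3) ->
  g2`_1 = 0 -> g3`_1 = 0 ->
  lmap (fun p : {poly R} => p`_1) s = LSer (lord s) (fpsX ^+ (e + e1) * fpsC g1`_1).
Proof.
case: s => L f /= -> h2 h3; rewrite /lmap /=; congr LSer; apply: funext => n.
rewrite coef_fpsXnC !mulrDr !mulrA -!exprD !fpsDE !coef_fpsXnC !coefD.
by case: (n == _); case: (n == _); case: (n == _); rewrite ?h2 ?h3 ?coef0 ?addr0 ?add0r.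
Qed.

Lemma wDom_linearised (R : comNzRingType) (w0 : R) (q1 q2 : nat) :
  lser_eq (lmap (fun p : {poly R} => p`_1)
      (wDom (LSer q1.+1 (fpsX ^+ q1 * fpsC w0%:P + fpsX ^+ q2 * fpsC 'X))))
    (lmono (q2%:Z - q1%:Z - 6) (resonance_poly w0).[(q2%:Z - q1%:Z)%:~R]).
Proof.
have := lfps_wDom_two_terms q1 q2 w0%:P 'X; cbv zeta.
set r := (q2%:R - q1%:R : {poly R}) => H.
rewrite (lmap_coef1 H); first last.
- by rewrite coefXnM.
- by rewrite mulrAC coefMXn.
have -> : (w0%:P ^+ 2 * 'X * resonance r)`_1 =
          (resonance_poly w0).[(q2%:Z - q1%:Z)%:~R].
  rewrite mulrAC coefMX /=.
  have -> : w0%:P ^+ 2 * resonance r = (w0 ^+ 2 * resonance (q2%:R - q1%:R))%:P.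
    by rewrite /r /resonance; ring.
  by rewrite coefC resonance_polyE intrB -!pmulrn.
apply: lser_eq_lmono; rewrite /=; lia.
Qed.

Lemma resonances (R : idomainType) (w0 : R) : w0 != 0 -> exists Q : {poly R},
  (forall r : int,
     lser_eq (lmap (fun p : {poly R} => p`_1)
                (wDom (ladd (lmono (-1) w0%:P) (lmono (r - 1) 'X))))
             (lmono (r - 6) Q.[r%:~R])) /\
  (forall z : R, root Q z <-> z \in [:: -1; 0; 1]).
Proof.
move=> w0n0; exists (resonance_poly w0); split => [r|z]; last first.
  by rewrite root_resonance_poly.
have [q1 [q2 [hr ->]]] := ladd_lmono_split w0%:P 'X r.
by rewrite -hr; exact: wDom_linearised.
Qed.

Section Truncation.
Variable R : comNzRingType.
Implicit Types A B c : fps R.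

Definition vanishes_below n A := forall i, (i < n)%N -> A i = 0.
Definition fps_trunc n c : fps R := fun i => if (i < n)%N then c i else 0.

Lemma vanishes_belowD n A B :
  vanishes_below n A -> vanishes_below n B -> vanishes_below n (A + B).
Proof. by move=> hA hB i hi; rewrite fpsDE hA ?hB ?addr0. Qed.

Lemma vanishes_belowM a b A B :
  vanishes_below a A -> vanishes_below b B -> vanishes_below (a + b) (A * B).
Proof.
move=> hA hB i hi; rewrite fpsME big1 // => j _.
case: (ltnP j a) => hj; first by rewrite hA // mul0r.
by rewrite hB ?mulr0 //; have := ltn_ord j; lia.
Qed.

Lemma vanishes_belowMr n A B : vanishes_below n A -> vanishes_below n (A * B).
Proof. by move=> hA; rewrite -[n]addn0; apply: vanishes_belowM. Qed.

Lemma vanishes_below_dtheta m n A :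
  vanishes_below n A -> vanishes_below n (dtheta m A).
Proof. by move=> hA i hi; rewrite dthetaE hA ?mulr0. Qed.

Lemma vanishes_below_trunc n c : vanishes_below n (c - fps_trunc n c).
Proof. by move=> i hi; rewrite fpsBE /fps_trunc hi subrr. Qed.

Lemma coefM_vanishes_below n A E :
  vanishes_below n E -> (A * E) n = A 0%N * E n.
Proof.
move=> hE; rewrite fpsME big_ord_recl subn0 big1 ?addr0 // => i _.
by rewrite hE ?mulr0 //= /bump /=; have := ltn_ord i; lia.
Qed.

Lemma fps_trunc_at n c : fps_trunc n c n = 0.
Proof. by rewrite /fps_trunc ltnn. Qed.

Lemma fps_trunc0 n c : (0 < n)%N -> fps_trunc n c 0%N = c 0%N.
Proof. by rewrite /fps_trunc => ->. Qed.

Lemma fps_trunc1 c : fps_trunc 1 c = fpsC (c 0%N).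
Proof. by apply: funext => -[|i]. Qed.

Lemma eq_fps_trunc n c d :
  (forall i, (i < n)%N -> c i = d i) -> fps_trunc n c = fps_trunc n d.
Proof. by move=> h; apply: funext => i; rewrite /fps_trunc; case: ifP => // /h. Qed.

Lemma coefM_trunc n A c :
  (A * c) n = (A * fps_trunc n c) n + A 0%N * c n.
Proof.
rewrite -[in LHS](subrK (fps_trunc n c) c) mulrDr fpsDE addrC.
by rewrite (coefM_vanishes_below _ (@vanishes_below_trunc n c)) fpsBE fps_trunc_at subr0.
Qed.

End Truncation.

Section StrongRecursion.
Variable R : comNzRingType.
Variable step : nat -> fps R -> R.
Hypothesis step_trunc :
  forall n (f g : fps R), (forall i, (i < n)%N -> f i = g i) -> step n f = step n g.

Fixpoint strong_rec_seq n : seq R :=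
  if n is n'.+1 then
    rcons (strong_rec_seq n') (step n' (fun i => nth 0 (strong_rec_seq n') i))
  else [::].

Lemma size_strong_rec_seq n : size (strong_rec_seq n) = n.
Proof. by elim: n => //= n IH; rewrite size_rcons IH. Qed.

Lemma nth_strong_rec_seq n m i :
  (i < n)%N -> (n <= m)%N -> nth 0 (strong_rec_seq m) i = nth 0 (strong_rec_seq n) i.
Proof.
move=> hi; elim: m => [|m IH] hm; first by have : (n <= 0)%N by []; lia.
case: (ltnP n m.+1) => h; last by have -> : n = m.+1 by lia.
rewrite /= nth_rcons size_strong_rec_seq (_ : (i < m)%N); last lia.
by rewrite IH //; lia.
Qed.

Definition strong_rec : fps R := fun i => nth 0 (strong_rec_seq i.+1) i.

Lemma strong_recE n : strong_rec n = step n strong_rec.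
Proof.
rewrite {1}/strong_rec /= nth_rcons size_strong_rec_seq ltnn eqxx.
by apply: step_trunc => i hi; rewrite /strong_rec (nth_strong_rec_seq (n := i.+1)).
Qed.

End StrongRecursion.

Lemma fps_invertible (R : comUnitRingType) (C : fps R) :
  C 0%N \is a GRing.unit -> exists B, C * B = 1.
Proof.
move=> C0; pose step n (f : fps R) : R :=
  if n == 0%N then (C 0%N)^-1 else - (C * fps_trunc n f) n / C 0%N.
have step_trunc n f g : (forall i, (i < n)%N -> f i = g i) -> step n f = step n g.
  by move=> h; rewrite /step (eq_fps_trunc h).
exists (strong_rec step); apply: funext => n.
rewrite coefM_trunc (strong_recE step_trunc) /step fps1E.
case: n => [|n] /=; first by rewrite fpsM0E fps_trunc_at mulr0 add0r mulrV.
by rewrite mulrCA mulrV // mulr1 subrr.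
Qed.

Section WEqCoefficients.
Variable R : comNzRingType.
Implicit Types c T E : fps R.

Definition wDom_coef c :=
  let c1 := dtheta 1 c in let c2 := dtheta 2 c1 in let c3 := dtheta 3 c2 in
  - (c * c * c3) + 6%:R * c * c1 * c2 - 6%:R * c1 * c1 * c1.
Definition wSub_coef c :=
  let c1 := dtheta 1 c in let c2 := dtheta 2 c1 in 2%:R * c * c2 - c1 * c1.
Definition wEq_coef c := wDom_coef c + fpsX ^+ 2 * wSub_coef c.

Lemma lfps_wDom c : lfps (wDom (LSer 1 c)) = fpsX ^+ 12 * wDom_coef c.
Proof.
rewrite /wDom /wDom_coef; cbv zeta.
by rewrite !lfpsE /= ?(rmorphN, rmorph_nat, rmorph1); ring.
Qed.

Lemma lfps_wEq c : lfps (wEq (LSer 1 c)) = fpsX ^+ 20 * wEq_coef c.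
Proof.
rewrite /wEq /wDom /wEq_coef /wDom_coef /wSub_coef; cbv zeta.
by rewrite !lfpsE /= ?(rmorphN, rmorph_nat, rmorph1); ring.
Qed.

Lemma lser_wEq_eq0 c : lser_eq (wEq (LSer 1 c)) (lconst 0) <-> wEq_coef c = 0.
Proof.
rewrite lser_eq0 lfps_wEq; split => [|->]; last by rewrite mulr0.
by move=> h; apply: (@fpsXnM_inj _ 20); rewrite h mulr0.
Qed.

Lemma wDom_coef_fpsC a : wDom_coef (fpsC a) = 0.
Proof.
rewrite /wDom_coef /dtheta; cbv zeta.
by rewrite !(eulerD, eulerN, eulerM, euler0, euler_fpsC, euler_nat); ring.
Qed.

Definition wEq_coef_lin T E :=
  let a0 := T in let a1 := dtheta 1 T in let a2 := dtheta 2 a1 in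
  let a3 := dtheta 3 a2 in
  let f0 := E in let f1 := dtheta 1 E in let f2 := dtheta 2 f1 in
  let f3 := dtheta 3 f2 in
  (- (2%:R * a0 * a3) + 6%:R * a1 * a2) * f0
  + (6%:R * a0 * a2 - 18%:R * a1 * a1) * f1 + (6%:R * a0 * a1) * f2
  + (- (a0 * a0)) * f3.
Definition wEq_coef_nonlin T E :=
  let a0 := T in let a1 := dtheta 1 T in let a2 := dtheta 2 a1 in
  let a3 := dtheta 3 a2 in
  let f0 := E in let f1 := dtheta 1 E in let f2 := dtheta 2 f1 in
  let f3 := dtheta 3 f2 in
  f0 * f0 * (- a3 - f3) + f0 * f3 * (- (2%:R * a0))
  + f1 * f2 * (6%:R * a0 + 6%:R * f0) + f0 * f2 * (6%:R * a1)
  + f0 * f1 * (6%:R * a2) + f1 * f1 * (- (18%:R * a1) - 6%:R * f1).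
Definition wSub_coef_diff T E :=
  let a0 := T in let a1 := dtheta 1 T in let a2 := dtheta 2 a1 in
  let f0 := E in let f1 := dtheta 1 E in let f2 := dtheta 2 f1 in
  f0 * (2%:R * a2 + 2%:R * f2) + f2 * (2%:R * a0) + f1 * (- (2%:R * a1) - f1).

Lemma wEq_coef_split T E :
  wEq_coef (T + E) = wEq_coef T + wEq_coef_lin T E + wEq_coef_nonlin T E
                     + fpsX ^+ 2 * wSub_coef_diff T E.
Proof.
rewrite /wEq_coef /wDom_coef /wSub_coef /wEq_coef_lin /wEq_coef_nonlin
        /wSub_coef_diff; cbv zeta.
by rewrite !dthetaD; ring.
Qed.

(* With T the truncation of c below n, only the part of the linearisation that
   multiplies c n survives in the coefficient of x^n; its factor is the
   resonance polynomial evaluated at n. *)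
Lemma wEq_coef_decomp c n : (0 < n)%N ->
  wEq_coef c n = wEq_coef (fps_trunc n c) n + c 0%N ^+ 2 * resonance n%:R * c n.
Proof.
move=> n0; set T := fps_trunc n c; set E := c - T.
have hE : vanishes_below n E by apply: vanishes_below_trunc.
have e1 := vanishes_below_dtheta 1 hE; have e2 := vanishes_below_dtheta 2 e1.
have e3 := vanishes_below_dtheta 3 e2.
rewrite -[in LHS](subrK T c) -/E addrC wEq_coef_split !fpsDE.
have -> : wEq_coef_nonlin T E n = 0.
  have hQ : vanishes_below (n + n) (wEq_coef_nonlin T E).
    rewrite /wEq_coef_nonlin; cbv zeta.
    by repeat apply: vanishes_belowD; apply: vanishes_belowMr; apply: vanishes_belowM.
  by apply: hQ; lia.
have -> : (fpsX ^+ 2 * wSub_coef_diff T E) n = 0.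
  have hD : vanishes_below n (wSub_coef_diff T E).
    rewrite /wSub_coef_diff; cbv zeta.
    by repeat apply: vanishes_belowD; apply: vanishes_belowMr.
  by rewrite coef_fpsXnM; case: ifP => // h; apply: hD; lia.
rewrite !addr0; congr (_ + _); rewrite /wEq_coef_lin; cbv zeta.
rewrite !fpsDE (coefM_vanishes_below _ hE) (coefM_vanishes_below _ e1).
rewrite (coefM_vanishes_below _ e2) (coefM_vanishes_below _ e3).
rewrite !(fpsDE, fpsBE, fpsNE, fpsM0E, fps_nat0E) !dthetaE /E fpsBE /T.
by rewrite fps_trunc0 // fps_trunc_at subr0 /resonance; ring.
Qed.

Lemma wEq_coef0 c : wEq_coef c 0%N = 0.
Proof.
rewrite /wEq_coef fpsDE coef_fpsXnM /= addr0 /wDom_coef; cbv zeta.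
by rewrite !(fpsDE, fpsBE, fpsNE, fpsM0E, fps_nat0E) !dthetaE; ring.
Qed.

Lemma wEq_coef1 c : wEq_coef c 1%N = 0.
Proof.
rewrite wEq_coef_decomp // fps_trunc1 /resonance subrr !mul0r oppr0 mulr0 mul0r.
by rewrite addr0 /wEq_coef wDom_coef_fpsC add0r coef_fpsXnM.
Qed.

End WEqCoefficients.

Lemma leading_order (R : comNzRingType) (w0 : R) :
  lser_eq (wDom (lmono (-1) w0)) (lconst 0).
Proof.
have -> : lmono (-1) w0 = LSer 1 (fpsC w0) by [].
by apply/lser_eq0; rewrite lfps_wDom wDom_coef_fpsC mulr0.
Qed.

Lemma resonance_nat_neq0 (R : numDomainType) n :
  (1 < n)%N -> resonance (n%:R : R) != 0.
Proof.
move=> hn; rewrite /resonance oppr_eq0 !mulf_neq0 //.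
- by rewrite subr_eq0 pnatr_eq1; lia.
- by rewrite pnatr_eq0; lia.
- by rewrite natr1 pnatr_eq0.
Qed.

Section RightPainleveSeries.
Variable R : numFieldType.
Implicit Types c d : fps R.

Lemma wEq_coef_eq0P c : c 0%N != 0 ->
  wEq_coef c = 0 <-> forall n, (1 < n)%N ->
    c n = - wEq_coef (fps_trunc n c) n / (c 0%N ^+ 2 * resonance n%:R).
Proof.
move=> c0; have dn n : (1 < n)%N -> c 0%N ^+ 2 * resonance (n%:R : R) != 0.
  by move=> hn; rewrite mulf_neq0 ?expf_neq0 ?resonance_nat_neq0.
split => [hc n hn | hrec].
  have := wEq_coef_decomp c (ltnW hn); rewrite hc fps0E => /eqP.
  by rewrite eq_sym addrC addr_eq0 => /eqP <-; rewrite mulrC mulKf // dn.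
apply: funext => -[|[|n]]; rewrite ?wEq_coef0 ?wEq_coef1 //.
by rewrite wEq_coef_decomp // fps0E [c n.+2]hrec // mulrCA divff ?dn // mulr1 subrr.
Qed.

Lemma right_painleve_series (w0 w1 : R) : w0 != 0 -> exists! c : nat -> R,
  c 0%N = w0 /\ c 1%N = w1 /\ lser_eq (wEq (LSer 1 c)) (lconst 0).
Proof.
move=> w0n0; pose step n (f : fps R) : R :=
  if n == 0%N then w0 else if n == 1%N then w1
  else - wEq_coef (fps_trunc n f) n / (w0 ^+ 2 * resonance n%:R).
have step_trunc n f g : (forall i, (i < n)%N -> f i = g i) -> step n f = step n g.
  by move=> h; rewrite /step (eq_fps_trunc h).
have cE := strong_recE step_trunc; set c := strong_rec step in cE.
have c0 : c 0%N = w0 by rewrite cE.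
have c1 : c 1%N = w1 by rewrite cE.
have c0n0 : c 0%N != 0 by rewrite c0.
exists c; split.
  do 2!split => //; apply/lser_wEq_eq0/(wEq_coef_eq0P c0n0) => n hn.
  by rewrite cE /step c0; case: n hn => [|[|n]].
move=> d [d0 [d1 /lser_wEq_eq0]].
have d0n0 : d 0%N != 0 by rewrite d0.
move=> /(wEq_coef_eq0P d0n0); rewrite d0 => drec.
apply: funext => n; elim/ltn_ind: n => -[|[|n]] IH; rewrite ?c0 ?d0 ?c1 ?d1 //.
by rewrite cE drec // /step /= (@eq_fps_trunc _ _ c d).
Qed.

End RightPainleveSeries.

Lemma chazy_of_wEq (R : numFieldType) (c : nat -> R) : c 0%N != 0 ->
  lser_eq (wEq (LSer 1 c)) (lconst 0) ->
  exists y : lser R, lser_eq (lmul y (LSer 1 c)) (lconst 1) /\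
                     lser_eq (chazy y) (lconst 0).
Proof.
rewrite -unitfE => c0 hE; have [B cB] := fps_invertible c0.
have yw : lser_eq (lmul (LSer 0 (fpsX * B)) (LSer 1 c)) (lconst 1).
  apply/lser_eqE; rewrite !lfpsE /= expr0 mul1r expr1 fpsC1 mulr1.
  by rewrite -mulrA (mulrC B) cB mulr1.
by exists (LSer 0 (fpsX * B)); split; last exact: chazy_inverse_eq0 yw hE.
Qed.

Theorem mainTheorem8 (R : numFieldType) :
  (forall w y : lser R, lser_eq (lmul y w) (lconst 1) ->
     lser_eq (lmul (lpow4 w) (chazy y)) (wEq w)) /\
  (forall w0 : R, lser_eq (wDom (lmono (-1) w0)) (lconst 0)) /\
  (forall w0 : R, w0 != 0 -> exists Q : {poly R},
     (forall r : int,
        lser_eq (lmap (fun p : {poly R} => p`_1)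
                   (wDom (ladd (lmono (-1) w0%:P) (lmono (r - 1) 'X))))
                (lmono (r - 6) Q.[r%:~R])) /\
     (forall z : R, root Q z <-> z \in [:: -1; 0; 1])) /\
  (forall w0 w1 : R, w0 != 0 -> exists! c : nat -> R,
     c 0%N = w0 /\ c 1%N = w1 /\ lser_eq (wEq (LSer 1 c)) (lconst 0)) /\
  (forall c : nat -> R, c 0%N != 0 -> lser_eq (wEq (LSer 1 c)) (lconst 0) ->
     exists y : lser R, lser_eq (lmul y (LSer 1 c)) (lconst 1) /\
                        lser_eq (chazy y) (lconst 0)).
Proof.
split; first exact: chazy_reciprocal.
split; first exact: leading_order.
split; first exact: resonances.
split; first exact: right_painleve_series.
exact: chazy_of_wEq.
Qed.
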